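(* Let $A$ and $C$ be abelian groups and let $H$ be a central extension of $A$ by $C$ (written multiplicatively), with commutator pairing $\{a,b\}:=\tilde a\tilde b\tilde a^{-1}\tilde b^{-1}\in C$ for lifts $\tilde a,\tilde b\in H$ of $a,b\in A$. Let $H^{(2)}$ be the Baer square of $H$, and $h\mapsto h^{(2)}$ the canonical homomorphism $H\to H^{(2)}$ lifting $\mathrm{id}_A$ (so $c^{(2)}=c^2$ for $c\in C$). For a symmetric structure $\sigma$ on $H$ define the set-theoretic section $s_\sigma:A\to H^{(2)}$ by $s_\sigma(a):=[\tilde a\,\sigma(\tilde a)]^{-1}\,\tilde a^{(2)}$, where $\tilde a\in H$ is any lift of $a$ and $[\tilde a\,\sigma(\tilde a)]\in C$ (equivalently, $s_\sigma(a)$ is the trivialization of the $C$-torsor $H^{(2)}_a=H_a\cdot H_a$ given by $h\cdot h'\mapsto h\sigma(h')=\sigma(h)h'\in C$). Then $\sigma\mapsto s_\sigma$ is a bijection between the set of symmetric structures on $H$ and the set of set-theoretic sections $s:A\to H^{(2)}$ of the projection $H^{(2)}\to A$ satisfying $s(a)s(b)=s(ab)\{a,b\}$ for all $a,b\in A$.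
   Context: A symmetric structure on the central $C$-extension $H$ of $A$ is an automorphism $\sigma$ of the group $H$ such that $\sigma^2=\mathrm{id}_H$, $\sigma|_C=\mathrm{id}_C$, and $\sigma$ induces on $A=H/C$ the involution $a\mapsto a^{-1}$. For $a\in A$, $H_a\subset H$ denotes the preimage of $a$ (a $C$-torsor). The Baer square $H^{(2)}$ is the quotient of $H\times_A H$ by the subgroup $\{(c,c^{-1}):c\in C\}$; it is a central $C$-extension of $A$ with $C$ embedded via $c\mapsto (c,1)$, and $h^{(2)}$ is the class of $(h,h)$. *)

From HB Require Import structures.
From mathcomp Require Import all_boot monoid.

Set Implicit Arguments.
Unset Strict Implicit.
Unset Printing Implicit Defensive.

Local Open Scope group_scope.

Section CentralExtension.

Variables (C H A : groupType) (i : C -> H) (p : H -> A).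

Definition central_extension : Prop :=
  (forall x y : C, x * y = y * x) /\
  (forall x y : A, x * y = y * x) /\
  {morph i : x y / x * y} /\
  {morph p : x y / x * y} /\
  injective i /\
  (forall a : A, exists h : H, p h = a) /\
  (forall h : H, p h = 1 <-> exists c : C, h = i c) /\
  (forall (c : C) (h : H), i c * h = h * i c).

Definition symmetric_structure (sigma : H -> H) : Prop :=
  [/\ {morph sigma : x y / x * y},
      (forall h, sigma (sigma h) = h),
      (forall c : C, sigma (i c) = i c)
    & (forall h, p (sigma h) = (p h)^-1)].

(* Baer square H^(2): quotient of H x_A H by {(c, c^-1)}.  Elements are
   represented as equivalence classes (predicates on H * H). *)
Definition baer_rel (x : H * H) : H * H -> Prop :=
  fun y => exists c : C, y.1 = x.1 * i c /\ y.2 = x.2 * (i c)^-1.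

Definition baer_sq : Type :=
  { P : H * H -> Prop | exists x : H * H, p x.1 = p x.2 /\ P = baer_rel x }.

(* Group law on H^(2), on the level of classes (the product of two classes
   is again a class since i(C) is central). *)
Definition baer_mul (P Q : H * H -> Prop) : H * H -> Prop :=
  fun z => exists x y, [/\ P x, Q y & z = (x.1 * y.1, x.2 * y.2)].

Definition baer_C (c : C) : H * H -> Prop := baer_rel (i c, 1).

Definition baer_sq_of (h : H) : H * H -> Prop := baer_rel (h, h).

Definition baer_over (X : baer_sq) (a : A) : Prop :=
  forall x, sval X x -> p x.1 = a.

Definition baer_section (s : A -> baer_sq) : Prop :=
  forall a, baer_over (s a) a.

Definition commutator_compatible (s : A -> baer_sq) : Prop :=
  forall (ha hb : H) (c : C),
    i c = ha * hb * ha^-1 * hb^-1 ->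
    baer_mul (sval (s (p ha))) (sval (s (p hb)))
    = baer_mul (sval (s (p ha * p hb))) (baer_C c).

Definition is_s_sigma (sigma : H -> H) (s : A -> baer_sq) : Prop :=
  forall (h : H) (c : C), i c = h * sigma h ->
    sval (s (p h)) = baer_mul (baer_C c^-1) (baer_sq_of h).

End CentralExtension.

(* An element of the Baer square over [a] is the class of a pair [(x, h)] with [h] any lift of
   [a], and [x] is determined by the class and [h].  So [sigma] and [s] determine each other by
   "[s (p h)] is the class of [(sigma(h)^-1, h)]", which is [is_s_sigma] because
   [sigma(h)^-1 = [h sigma(h)]^-1 h].  Under this dictionary, [s (p h)] depending only on [p h]
   says [sigma (h c) = sigma(h) c], so [sigma] fixes [C]; and [s(a) s(b) = s(ab) {a,b}] reads
   [sigma (x y) = {x,y} sigma(y) sigma(x)], which is [sigma (x y) = sigma(x) sigma(y)] because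
   [h sigma(h)] is central for every [h].  A multiplicative [sigma] fixing [C] is automatically an
   involution. *)
From Stdlib Require Import FunctionalExtensionality PropExtensionality ProofIrrelevance.
From Stdlib Require ClassicalEpsilon.
From HB Require Import structures.
From mathcomp Require Import all_boot monoid.

Set Implicit Arguments.
Unset Strict Implicit.

Local Open Scope group_scope.

Section GroupMorphism.
Variables (G K : groupType) (f : G -> K).
Hypothesis fM : {morph f : x y / x * y}.

Lemma morphg1 : f 1 = 1.
Proof. by apply: (mulgI (f 1)); rewrite -fM !mulg1. Qed.

Lemma morphgV : {morph f : x / x^-1}.
Proof. by move=> x; apply: (mulgI (f x)); rewrite -fM !mulgV morphg1. Qed.

End GroupMorphism.

Section SymmetricStructures.
Variables (C H A : groupType) (i : C -> H) (p : H -> A).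
Hypothesis mulAC : forall a b : A, a * b = b * a.
Hypothesis iM : {morph i : x y / x * y}.
Hypothesis pM : {morph p : x y / x * y}.
Hypothesis p_surj : forall a, exists h, p h = a.
Hypothesis ker_p : forall h, p h = 1 <-> exists c, h = i c.
Hypothesis i_central : forall c h, i c * h = h * i c.

Lemma p_i c : p (i c) = 1.
Proof. by apply/ker_p; exists c. Qed.

Lemma i_centralV c h : (i c)^-1 * h = h * (i c)^-1.
Proof. by rewrite -(morphgV iM) i_central. Qed.

Lemma fiber_shift h h' : p h = p h' -> exists e, h' = h * i e.
Proof.
move=> phh'; have /ker_p [e he] : p (h^-1 * h') = 1.
  by rewrite pM (morphgV pM) phh' mulVg.
by exists e; rewrite -he mulVKg.
Qed.

Lemma baer_rel_refl x : baer_rel i x x.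
Proof. by exists 1; rewrite (morphg1 iM) invg1 !mulg1. Qed.

Lemma baer_rel_sym x y : baer_rel i x y -> baer_rel i y x.
Proof.
case: x y => [x1 x2] [y1 y2] [c [/= -> ->]]; exists c^-1; rewrite (morphgV iM) invgK.
by rewrite mulgK mulgVK.
Qed.

Lemma baer_rel_trans x y z : baer_rel i x y -> baer_rel i y z -> baer_rel i x z.
Proof.
case: y z => [y1 y2] [z1 z2] [c [/= -> ->]] [d [/= -> ->]].
by exists (c * d); rewrite iM invgM -!mulgA i_centralV.
Qed.

Lemma baer_rel_eq x y : baer_rel i x y -> baer_rel i x = baer_rel i y.
Proof.
move=> xy; apply: functional_extensionality => z; apply: propositional_extensionality.
split; [exact: baer_rel_trans (baer_rel_sym xy) | exact: baer_rel_trans xy].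
Qed.

Lemma baer_rel_fst x y h : baer_rel i (x, h) = baer_rel i (y, h) -> x = y.
Proof.
move=> xy; have [c [/= -> hc]] : baer_rel i (x, h) (y, h) by rewrite xy; exact: baer_rel_refl.
have /invg_inj ic1 : (i c)^-1 = 1^-1 by rewrite invg1; apply: (mulgI h); rewrite mulg1.
by rewrite ic1 mulg1.
Qed.

Lemma baer_rel_shift x h e : baer_rel i (x * (i e)^-1, h * i e) = baer_rel i (x, h).
Proof. by apply/esym/baer_rel_eq; exists e^-1; rewrite (morphgV iM) invgK. Qed.

Lemma baer_rel_p1 x y : baer_rel i x y -> p y.1 = p x.1.
Proof. by case: y => [y1 y2] [c [/= -> _]]; rewrite pM p_i mulg1. Qed.

Lemma baer_mul_rel x y :
  baer_mul (baer_rel i x) (baer_rel i y) = baer_rel i (x.1 * y.1, x.2 * y.2).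
Proof.
apply: functional_extensionality => z; apply: propositional_extensionality; split.
- case=> u [v [[c [-> ->]] [d [-> ->]] ->]]; exists (c * d) => /=.
  rewrite iM invgM; split.
  + by rewrite -!mulgA (mulgA (i c)) (i_central c y.1) !mulgA.
  + by rewrite -!mulgA (mulgA (i c)^-1) (i_centralV c y.2) -mulgA (i_centralV c).
- case=> c [z1 z2]; exists x, (y.1 * i c, y.2 * (i c)^-1).
  split; [exact: baer_rel_refl | by exists c |].
  by rewrite [z]surjective_pairing z1 z2 !mulgA.
Qed.

Definition baer_class x (px : p x.1 = p x.2) : baer_sq i p :=
  exist _ (baer_rel i x) (ex_intro _ x (conj px erefl)).

Lemma baer_sq_inj (X Y : baer_sq i p) : sval X = sval Y -> X = Y.
Proof. exact: eq_sig_hprop (fun _ _ _ => proof_irrelevance _ _ _) X Y. Qed.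

Lemma baer_over_rel (X : baer_sq i p) h :
  baer_over X (p h) -> exists y, sval X = baer_rel i (y, h).
Proof.
case: X => P [[x1 x2] [/= px eP]]; subst P.
move=> /(_ _ (baer_rel_refl _)) /= px1.
have [e ->] : exists e, x2 = h * i e by apply: fiber_shift; rewrite -px px1.
by exists (x1 * i e); rewrite -(baer_rel_shift (x1 * i e) h e) mulgK.
Qed.

Section InvertingLift.
Variable sigma : H -> H.
Hypothesis sigmaV : forall h, p (sigma h) = (p h)^-1.

Lemma sym_defect h : exists c, i c = h * sigma h.
Proof.
have /ker_p [c hc] : p (h * sigma h) = 1 by rewrite pM sigmaV mulgV.
by exists c.
Qed.

Lemma sym_twisted_morph x y c :
  i c = x * y * x^-1 * y^-1 -> i c * sigma y * sigma x = sigma x * sigma y.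
Proof.
move=> hc; have [d hd] := sym_defect x; have [e he] := sym_defect y.
have -> : sigma x = x^-1 * i d by rewrite hd mulKg.
have -> : sigma y = y^-1 * i e by rewrite he mulKg.
have comm : i c * y^-1 * x^-1 = x^-1 * y^-1.
  by rewrite -mulgA i_central hc !mulgA mulgVK mulVg mul1g.
rewrite !mulgA -(mulgA _ (i e)) (i_central e x^-1) !mulgA comm.
by rewrite -[in RHS](mulgA x^-1) (i_central d y^-1) -!mulgA (i_central e).
Qed.

Lemma sym_involutive :
  {morph sigma : x y / x * y} -> (forall c, sigma (i c) = i c) -> forall h, sigma (sigma h) = h.
Proof.
move=> sM sC h; have [d hd] := sym_defect h.
have {1}-> : sigma h = h^-1 * i d by rewrite hd mulKg.
by rewrite sM (morphgV sM) sC -i_central hd mulgK.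
Qed.

Lemma symmetric_structure_of_shift :
    {morph sigma : x y / x * y} -> (forall h e, sigma (h * i e) = sigma h * i e) ->
  symmetric_structure i p sigma.
Proof.
move=> sM sS; have sC c : sigma (i c) = i c by rewrite -[i c]mul1g sS (morphg1 sM) mul1g.
by split=> //; apply: sym_involutive.
Qed.

End InvertingLift.

Definition section_of_sym (sigma : H -> H) (s : A -> baer_sq i p) : Prop :=
  forall h, sval (s (p h)) = baer_rel i ((sigma h)^-1, h).

Lemma is_s_sigmaE sigma s :
  (forall h, p (sigma h) = (p h)^-1) -> is_s_sigma sigma s <-> section_of_sym sigma s.
Proof.
move=> sigmaV.
have s_sigmaE h c : i c = h * sigma h ->
    baer_mul (baer_C i c^-1) (baer_sq_of i h) = baer_rel i ((sigma h)^-1, h).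
  by move=> hc; rewrite baer_mul_rel /= mul1g (morphgV iM) hc invgM mulgVK.
split=> hs h; last by move=> c hc; rewrite hs s_sigmaE.
by have [c hc] := sym_defect sigmaV h; rewrite (hs h c hc) s_sigmaE.
Qed.

Section SectionOfSym.
Variables (sigma : H -> H) (s : A -> baer_sq i p).
Hypothesis sigmaV : forall h, p (sigma h) = (p h)^-1.
Hypothesis hs : section_of_sym sigma s.

Lemma section_of_sym_baer_section : baer_section s.
Proof.
move=> a x; have [h <-] := p_surj a.
by rewrite hs => /baer_rel_p1 /=; rewrite (morphgV pM) sigmaV invgK.
Qed.

Lemma section_of_sym_shift h e : sigma (h * i e) = sigma h * i e.
Proof.
move: (hs (h * i e)); rewrite pM p_i mulg1 hs -(baer_rel_shift (sigma h)^-1 h e).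
by move=> /baer_rel_fst; rewrite -invgM => /invg_inj <-; rewrite i_central.
Qed.

Lemma section_of_sym_compatibleE :
  commutator_compatible s <-> {morph sigma : x y / x * y}.
Proof.
have compatible_at x y c : i c = x * y * x^-1 * y^-1 ->
    baer_mul (sval (s (p x))) (sval (s (p y))) = baer_mul (sval (s (p x * p y))) (baer_C i c)
    <-> sigma (x * y) = sigma x * sigma y.
  move=> hc; rewrite -pM !hs !baer_mul_rel /= mulg1 -(sym_twisted_morph sigmaV hc).
  split=> [/baer_rel_fst | ->]; last by rewrite !invgM !mulgA mulgVK.
  by move/(congr1 (fun g => g^-1)); rewrite !invgM !invgK -mulgA => ->; rewrite mulVKg.
split=> [compat x y | sM x y c hc]; last exact/(compatible_at _ _ _ hc).
have /ker_p [c hc] : p (x * y * x^-1 * y^-1) = 1.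
  by rewrite !pM !(morphgV pM) (mulAC (p x)) mulgK mulgV.
by apply/(compatible_at _ _ c (esym hc))/compat.
Qed.

End SectionOfSym.

Lemma section_of_sym_unique_section sigma s s' :
  section_of_sym sigma s -> section_of_sym sigma s' -> s' = s.
Proof.
move=> hs hs'; apply: functional_extensionality => a; have [h <-] := p_surj a.
by apply: baer_sq_inj; rewrite hs hs'.
Qed.

Lemma section_of_sym_unique_sym sigma sigma' s :
  section_of_sym sigma s -> section_of_sym sigma' s -> sigma' = sigma.
Proof.
move=> hs hs'; apply: functional_extensionality => h.
by apply: invg_inj; apply: (@baer_rel_fst _ _ h); rewrite -hs -hs'.
Qed.

Lemma exists_section_of_sym sigma :
  symmetric_structure i p sigma -> exists s, section_of_sym sigma s.
Proof.
case=> sM _ sC sigmaV.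
have s_at a : exists X : baer_sq i p,
    forall h, p h = a -> sval X = baer_rel i ((sigma h)^-1, h).
  have [h0 <-] := p_surj a.
  have ph0 : p ((sigma h0)^-1, h0).1 = p ((sigma h0)^-1, h0).2.
    by rewrite /= (morphgV pM) sigmaV invgK.
  exists (baer_class ph0) => h /esym /fiber_shift [e ->] /=.
  by rewrite sM sC invgM i_centralV baer_rel_shift.
have [s hs] := ClassicalEpsilon.choice _ s_at.
by exists s => h; apply: hs.
Qed.

Lemma exists_sym_of_section (s : A -> baer_sq i p) : baer_section s ->
  exists sigma, (forall h, p (sigma h) = (p h)^-1) /\ section_of_sym sigma s.
Proof.
move=> s_sec.
have sigma_at h : exists y, sval (s (p h)) = baer_rel i (y^-1, h).
  by have [y hy] := baer_over_rel (s_sec (p h)); exists y^-1; rewrite invgK.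
have [sigma hsigma] := ClassicalEpsilon.choice _ sigma_at.
exists sigma; split=> // h.
have := s_sec (p h) ((sigma h)^-1, h); rewrite hsigma => /(_ (baer_rel_refl _)) /=.
by rewrite (morphgV pM) => <-; rewrite invgK.
Qed.

Lemma section_of_symmetric_structure sigma : symmetric_structure i p sigma ->
  exists s : A -> baer_sq i p,
    [/\ baer_section s, commutator_compatible s & is_s_sigma sigma s] /\
    (forall s', is_s_sigma sigma s' -> s' = s).
Proof.
move=> sym; have [sM _ _ sigmaV] := sym; have [s hs] := exists_section_of_sym sym.
exists s; split; first split.
- exact: section_of_sym_baer_section sigmaV hs.
- exact/(section_of_sym_compatibleE sigmaV hs).
- exact/(is_s_sigmaE _ sigmaV).
- by move=> s' /(is_s_sigmaE _ sigmaV) hs'; apply: section_of_sym_unique_section hs hs'.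
Qed.

Lemma symmetric_structure_of_section (s : A -> baer_sq i p) :
  baer_section s -> commutator_compatible s ->
  exists! sigma, symmetric_structure i p sigma /\ is_s_sigma sigma s.
Proof.
move=> s_sec compat; have [sigma [sigmaV hs]] := exists_sym_of_section s_sec.
exists sigma; split.
  split; last exact/(is_s_sigmaE _ sigmaV).
  apply: symmetric_structure_of_shift => //; last exact: section_of_sym_shift hs.
  exact/(section_of_sym_compatibleE sigmaV hs).
move=> sigma' [[_ _ _ sigma'V] /(is_s_sigmaE _ sigma'V) hs'].
exact: section_of_sym_unique_sym hs' hs.
Qed.

End SymmetricStructures.

Theorem lemma1p2 (C H A : groupType) (i : C -> H) (p : H -> A) :
  central_extension i p ->
  (* sigma |-> s_sigma is a well-defined map into the admissible sections ... *)
  (forall sigma : H -> H, symmetric_structure i p sigma ->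
     exists s : A -> baer_sq i p,
       [/\ baer_section s, commutator_compatible s & is_s_sigma sigma s] /\
       (forall s' : A -> baer_sq i p, is_s_sigma sigma s' -> s' = s)) /\
  (* ... which is bijective onto them. *)
  (forall s : A -> baer_sq i p,
     baer_section s -> commutator_compatible s ->
     exists! sigma : H -> H, symmetric_structure i p sigma /\ is_s_sigma sigma s).
Proof.
case=> _ [mulAC [iM [pM [_ [p_surj [ker_p i_central]]]]]]; split.
- exact: section_of_symmetric_structure.
- exact: symmetric_structure_of_section.
Qed.
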